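(* Let $\mu$ be a probability measure with bounded support contained in $[0,\infty)$, and let $b=\sup\operatorname{supp}\mu$. For $q\in[0,1]$ and $x>b$ define $$T_2(x;q)=\frac{\varphi_\mu'(x;q)}{\varphi_\mu(x;q)\,\varphi_\mu(x;1)}.$$ Then for every fixed $x>b$ and every $q\in[0,1]$, $$\frac{\partial T_2}{\partial x}(x;q)\ \ge\ \frac{\partial T_2}{\partial x}(x;0).$$
   Context: For $s\in[0,1]$ and $x>b$, set $\varphi_\mu(x;s)=s\int\frac{x}{x^2-t^2}\,d\mu(t)+\frac{1-s}{x}$. Here $\varphi_\mu'(x;s)$ denotes the derivative in $x$, namely $\varphi_\mu'(x;s)=-\big(s\int\frac{x^2+t^2}{(x^2-t^2)^2}\,d\mu(t)+\frac{1-s}{x^2}\big)$. *)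

From HB Require Import structures.
From mathcomp Require Import all_boot all_order all_algebra.
From mathcomp Require Import all_classical all_reals all_analysis.
Set Implicit Arguments. Unset Strict Implicit. Unset Printing Implicit Defensive.
Import Order.TTheory GRing.Theory Num.Theory.
Import numFieldNormedType.Exports.
Local Open Scope classical_set_scope.
Local Open Scope ring_scope.

(* Support of a measure on the real line: points all of whose open
   neighbourhoods have positive measure (= smallest closed set of full measure). *)
Definition msupport (R : realType) (mu : {measure set R -> \bar R}) : set R :=
  [set x | forall e : R, 0 < e -> (0 < mu (ball x e))%E].

Definition phi (R : realType) (mu : {measure set R -> \bar R}) (x s : R) : R :=
  s * Rintegral mu setT (fun t => x / (x ^+ 2 - t ^+ 2)) + (1 - s) / x.

Definition dphi (R : realType) (mu : {measure set R -> \bar R}) (x s : R) : R :=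
  - (s * Rintegral mu setT (fun t => (x ^+ 2 + t ^+ 2) / (x ^+ 2 - t ^+ 2) ^+ 2)
     + (1 - s) / x ^+ 2).

Definition T2 (R : realType) (mu : {measure set R -> \bar R}) (x q : R) : R :=
  dphi mu x q / (phi mu x q * phi mu x 1).

From HB Require Import structures.
From mathcomp Require Import all_boot all_order all_algebra.
From mathcomp Require Import all_classical all_reals all_analysis.
From mathcomp Require Import ring lra measurable_realfun.
Set Implicit Arguments.
Unset Strict Implicit.
Unset Printing Implicit Defensive.
Import Order.TTheory GRing.Theory Num.Theory.
Import numFieldNormedType.Exports.
Local Open Scope classical_set_scope.
Local Open Scope ring_scope.

(* Write A, B and D for the integrals against mu of the kernels
   x/(x^2-t^2), (x^2+t^2)/(x^2-t^2)^2 and 2x(x^2+3t^2)/(x^2-t^2)^3, so that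
   phi(x;q) = q A + (1-q)/x, phi'(x;q) = -(q B + (1-q)/x^2), A' = -B and
   B' = -D.  The quotient rule then gives
     d/dx T2(x;q) - d/dx T2(x;0) = q ((1-q) Q1 + q A Q2) / (A (q A x + 1 - q))^2
   with Q1 = x A D - A B - x B^2 and Q2 = x^2 A D + x A B - 2 x^2 B^2 - A^2.
   Let G be the integral of (x^2+t^2)^2/(x (x^2-t^2)^3).  Cauchy-Schwarz gives
   B^2 <= A G, while x D - B - x G and x^2 D + x B - A - 2 x^2 G are the
   integrals of 4x^2t^2/(x^2-t^2)^3 >= 0 and 4xt^2/(x^2-t^2)^2 >= 0; hence
   Q1 = A (x D - B - x G) + x (A G - B^2) >= 0, and similarly Q2 >= 0.
   As mu is carried by some [-c, c] with c < x, all kernels are uniformly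
   bounded near x, which justifies differentiating under the integral. *)

(* Every point outside the support lies in a null ball with rational centre
   and radius, and there are only countably many such balls. *)
Lemma msupportC_negligible (R : realType) (mu : {measure set R -> \bar R}) :
  mu.-negligible (~` msupport mu).
Proof.
pose F (n : nat) : set R :=
  if unpickle n is Some (p, r) then
    if mu (ball (ratr p : R) (ratr r)) == 0%E then ball (ratr p : R) (ratr r)
    else set0
  else set0.
apply: (@negligibleS _ _ _ _ (\bigcup_n F n)).
  move=> t /= /existsNP[e /not_implyP[e_gt0 /negP]]; rewrite -leNgt => mu_e.
  have mu_e0 : mu (ball t e) = 0%E by apply/eqP; rewrite eq_le mu_e measure_ge0.
  have [p] := @rat_in_itvoo R (t - e / 4) (t + e / 4) ltac:(lra).
  rewrite in_itv /= => /andP[p1 p2].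
  have [r] := @rat_in_itvoo R (e / 4) (e / 2) ltac:(lra).
  rewrite in_itv /= => /andP[r1 r2].
  have ball_sub : ball (ratr p : R) (ratr r) `<=` ball t e.
    move=> z; rewrite /ball /= => pz.
    have tp : `|t - ratr p| < e / 4 by rewrite ltr_norml; apply/andP; split; lra.
    rewrite (_ : t - z = (t - ratr p) + (ratr p - z)); last by rewrite addrA subrK.
    by apply: (le_lt_trans (ler_normD _ _)); lra.
  exists (pickle (p, r)); first by [].
  rewrite /F pickleK /=.
  have -> : mu (ball (ratr p : R) (ratr r)) == 0%E.
    rewrite eq_le measure_ge0 andbT -mu_e0.
    by apply: le_measure => //; rewrite inE; exact: measurable_ball.
  by rewrite /ball /= ltr_norml; apply/andP; split; lra.
apply: negligible_bigcup => n; rewrite /F.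
case: (unpickle n) => [[p r]|]; last exact: negligible_set0.
case: ifPn => [/eqP mu0|_]; last exact: negligible_set0.
by exists (ball (ratr p : R) (ratr r)); split => //; exact: measurable_ball.
Qed.

Lemma negligibleC_probability1 d (T : measurableType d) (R : realType)
    (P : probability T R) (A : set T) :
  measurable A -> P.-negligible (~` A) -> P A = 1%E.
Proof.
move=> mA nullAC.
have PA_fin : P A \is a fin_num.
  by rewrite ge0_fin_numE ?measure_ge0 // (le_lt_trans (probability_le1 P mA)) ?ltry.
have := probability_setC P mA.
rewrite (measure_negligible (measurableC mA) nullAC) -(fineK PA_fin) -EFinB => -[PA].
by rewrite -(fineK PA_fin); congr EFin; lra.
Qed.

Lemma RintegralT_negligibleC d (T : measurableType d) (R : realType)
    (mu : {measure set T -> \bar R}) (D : set T) (f : T -> R) :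
  measurable D -> measurable_fun setT f -> mu.-negligible (~` D) ->
  Rintegral mu setT f = Rintegral mu D f.
Proof.
move=> mD mf nullDC; rewrite [RHS]Rintegral_mkcond; congr fine.
apply: ae_eq_integral => //.
- exact/measurable_EFinP.
- apply/measurable_EFinP; apply/(measurable_restrictT _ _).1 => //.
  exact: measurable_funTS.
- apply: negligibleS nullDC => t /= ft; apply: contra_not ft => Dt _.
  by rewrite patchE mem_set.
Qed.

Lemma integrable_bounded d (T : measurableType d) (R : realType)
    (P : probability T R) (D : set T) (f : T -> R) (M : R) :
  measurable D -> measurable_fun setT f -> (forall t, D t -> `|f t| <= M) ->
  P.-integrable D (EFin \o f).
Proof.
move=> mD mf f_le; apply: measurable_bounded_integrable => //.
- by rewrite (le_lt_trans (probability_le1 _ _))// ltry.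
- exact: measurable_funTS.
- rewrite /bounded_near; near=> M0 => t /= Dt; apply: (le_trans (f_le t Dt)).
  by near: M0; apply: nbhs_pinfty_ge; exact: num_real.
Unshelve. all: end_near. Qed.

Lemma is_derive_Rintegral d (T : measurableType d) (R : realType)
    (mu : {measure set T -> \bar R}) (D : set T) (f df : R -> T -> R)
    (G : T -> R) (u v a : R) :
  measurable D -> u < a < v ->
  (forall y, u < y < v -> mu.-integrable D (EFin \o f y)) ->
  (forall y t, u < y < v -> D t -> is_derive y 1 (f ^~ t) (df y t)) ->
  (forall t, 0 <= G t) -> mu.-integrable D (EFin \o G) ->
  (forall y t, u < y < v -> D t -> `|df y t| <= G t) ->
  is_derive a 1 (fun y => Rintegral mu D (f y)) (Rintegral mu D (df a)).
Proof.
move=> mD uav intf fdf G_ge0 intG df_le.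
have uav' : `]u, v[%classic a by rewrite /= in_itv.
have intf' y : `]u, v[%classic y -> mu.-integrable D (EFin \o f y).
  by rewrite /= in_itv => /intf.
have derf y t : `]u, v[%classic y -> D t -> derivable (f ^~ t) y 1.
  by rewrite /= in_itv => /fdf /[apply] -[].
have d1f y t : `]u, v[%classic y -> D t -> partial1of2 f y t = df y t.
  by rewrite /= in_itv => /fdf /[apply] fdf'; rewrite partial1of2E derive_val.
have d1f_le y t : `]u, v[%classic y -> D t -> `|partial1of2 f y t| <= G t.
  by move=> uyv Dt; rewrite d1f //; move: uyv; rewrite /= in_itv => /df_le; apply.
apply: DeriveDef; first exact: derivable_under_integral d1f_le.
rewrite -derive1E (differentiation_under_integral mD uav' intf' derf G_ge0 intG d1f_le).
by apply: eq_Rintegral => t /[!inE] Dt; rewrite d1f.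
Qed.

Lemma measurable_fun_inv (R : realType) : measurable_fun [set: R] (@GRing.inv R).
Proof.
rewrite -(setUv [set (0:R)]).
apply/measurable_funU => //; first exact: measurableC.
split; first exact: measurable_fun_set1.
apply: open_continuous_measurable_fun.
  by rewrite openC; apply/accessible_closed_set1/hausdorff_accessible/Rhausdorff.
by move=> x /[!inE] /eqP x0; exact: inv_continuous.
Qed.

Lemma measurable_fun_divr (R : realType) (f g : R -> R) :
  measurable_fun setT f -> measurable_fun setT g ->
  measurable_fun setT (fun t => f t / g t).
Proof.
move=> mf mg; apply: measurable_funM => //.
exact: measurableT_comp (@measurable_fun_inv R) mg.
Qed.

Definition phi_kernel {R : realType} (y t : R) := y / (y ^+ 2 - t ^+ 2).
Definition dphi_kernel {R : realType} (y t : R) :=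
  (y ^+ 2 + t ^+ 2) / (y ^+ 2 - t ^+ 2) ^+ 2.
Definition d2phi_kernel {R : realType} (y t : R) :=
  2 * y * (y ^+ 2 + 3 * t ^+ 2) / (y ^+ 2 - t ^+ 2) ^+ 3.
(* [dphi_kernel y t ^+ 2 / phi_kernel y t], so that [B^2 <= A G] is an instance
   of Cauchy-Schwarz. *)
Definition cs_kernel {R : realType} (y t : R) :=
  (y ^+ 2 + t ^+ 2) ^+ 2 / (y * (y ^+ 2 - t ^+ 2) ^+ 3).

Section kernel_measurability.
Context {R : realType}.
Implicit Types y : R.

Ltac measurable_rational := repeat first
  [ exact: measurable_cst | exact: exprn_measurable
  | apply: measurable_fun_divr | apply: measurable_funM
  | apply: measurable_funB | apply: measurable_funD | apply: measurable_funX ].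

Lemma measurable_phi_kernel y : measurable_fun setT (phi_kernel y).
Proof. by measurable_rational. Qed.

Lemma measurable_dphi_kernel y : measurable_fun setT (dphi_kernel y).
Proof. by measurable_rational. Qed.

Lemma measurable_d2phi_kernel y : measurable_fun setT (d2phi_kernel y).
Proof. by measurable_rational. Qed.

Lemma measurable_cs_kernel y : measurable_fun setT (cs_kernel y).
Proof. by measurable_rational. Qed.

End kernel_measurability.

Lemma norm_divr_le (R : realFieldType) (a b N m : R) :
  0 < m -> m <= b -> `|a| <= N -> `|a / b| <= N / m.
Proof.
move=> m_gt0 mb aN; have b_gt0 : 0 < b := lt_le_trans m_gt0 mb.
rewrite normrM normfV (gtr0_norm b_gt0); apply: ler_pM => //.
  by rewrite invr_ge0 ltW.
by rewrite lef_pV2 // posrE.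
Qed.

Section kernel_bounds.
Context {R : realType}.
Variables (c u v y t : R).

Lemma kernel_window_sqr : 0 <= c -> c < u -> u <= y <= v -> -c <= t <= c ->
  [/\ 0 < u ^+ 2 - c ^+ 2, u ^+ 2 - c ^+ 2 <= y ^+ 2 - t ^+ 2,
       y ^+ 2 <= v ^+ 2 & t ^+ 2 <= c ^+ 2].
Proof.
move=> c_ge0 cu /andP[uy yv] /andP[ct tc].
have y2_le : y ^+ 2 <= v ^+ 2 by rewrite -subr_ge0 subr_sqr mulr_ge0 //; lra.
have t2_le : t ^+ 2 <= c ^+ 2 by rewrite -subr_ge0 subr_sqr mulr_ge0 //; lra.
have u2_le : u ^+ 2 <= y ^+ 2 by rewrite -subr_ge0 subr_sqr mulr_ge0 //; lra.
split=> //; first by rewrite subr_sqr mulr_gt0 //; lra.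
by rewrite lerB.
Qed.

Lemma kernel_denom_gt0 : 0 <= c -> c < u -> u <= y <= v -> -c <= t <= c ->
  0 < y ^+ 2 - t ^+ 2.
Proof.
move=> c_ge0 cu uyv tc; have [gap_gt0 gap_le _ _] := kernel_window_sqr c_ge0 cu uyv tc.
exact: lt_le_trans gap_le.
Qed.

Lemma phi_kernel_bound : 0 <= c -> c < u -> u <= y <= v -> -c <= t <= c ->
  `|phi_kernel y t| <= v / (u ^+ 2 - c ^+ 2).
Proof.
move=> c_ge0 cu uyv tc.
have [gap_gt0 gap_le _ _] := kernel_window_sqr c_ge0 cu uyv tc.
have /andP[uy yv] := uyv.
by apply: norm_divr_le => //; rewrite ger0_norm; lra.
Qed.

Lemma dphi_kernel_bound : 0 <= c -> c < u -> u <= y <= v -> -c <= t <= c ->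
  `|dphi_kernel y t| <= (v ^+ 2 + c ^+ 2) / (u ^+ 2 - c ^+ 2) ^+ 2.
Proof.
move=> c_ge0 cu uyv tc.
have [gap_gt0 gap_le y2_le t2_le] := kernel_window_sqr c_ge0 cu uyv tc.
apply: norm_divr_le; first exact: exprn_gt0.
  by apply: lerXn2r; rewrite ?nnegrE; lra.
by rewrite ger0_norm ?addr_ge0 ?sqr_ge0 ?lerD.
Qed.

Lemma d2phi_kernel_bound : 0 <= c -> c < u -> u <= y <= v -> -c <= t <= c ->
  `|d2phi_kernel y t| <= 2 * v * (v ^+ 2 + 3 * c ^+ 2) / (u ^+ 2 - c ^+ 2) ^+ 3.
Proof.
move=> c_ge0 cu uyv tc.
have [gap_gt0 gap_le y2_le t2_le] := kernel_window_sqr c_ge0 cu uyv tc.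
have /andP[uy yv] := uyv.
apply: norm_divr_le; first exact: exprn_gt0.
  by apply: lerXn2r; rewrite ?nnegrE; lra.
have y_ge0 : 0 <= y by lra.
have t2_ge0 := sqr_ge0 t.
rewrite ger0_norm; last by apply: mulr_ge0; lra.
by apply: ler_pM; lra.
Qed.

Lemma cs_kernel_bound : 0 <= c -> c < u -> u <= y <= v -> -c <= t <= c ->
  `|cs_kernel y t| <= (v ^+ 2 + c ^+ 2) ^+ 2 / (u * (u ^+ 2 - c ^+ 2) ^+ 3).
Proof.
move=> c_ge0 cu uyv tc.
have [gap_gt0 gap_le y2_le t2_le] := kernel_window_sqr c_ge0 cu uyv tc.
have /andP[uy yv] := uyv.
have t2_ge0 := sqr_ge0 t.
apply: norm_divr_le.
- by rewrite mulr_gt0 ?exprn_gt0 //; lra.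
- apply: ler_pM; [lra | exact/ltW/exprn_gt0 | lra |].
  by apply: lerXn2r; rewrite ?nnegrE; lra.
- rewrite ger0_norm; last by apply: exprn_ge0; lra.
  by apply: lerXn2r; rewrite ?nnegrE; lra.
Qed.

End kernel_bounds.

Lemma is_derive_divr (R : realType) (f g : R -> R) (x df dg : R) :
  is_derive x 1 f df -> is_derive x 1 g dg -> g x != 0 ->
  is_derive x 1 (fun y => f y / g y) ((df * g x - f x * dg) / g x ^+ 2).
Proof.
move=> fdf gdg gx0; have := is_deriveV gx0 gdg.
move=> /(is_deriveM fdf) fgV; apply: is_derive_eq.
by rewrite -![_ *: _]/(_ * _); field.
Qed.

Section kernel_derivatives.
Context {R : realType}.
Variable t : R.

Lemma is_derive_phi_kernel (y : R) : y ^+ 2 - t ^+ 2 != 0 ->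
  is_derive y 1 (phi_kernel ^~ t) (- dphi_kernel y t).
Proof.
move=> yt0; have dden : is_derive y 1 (fun z : R => z ^+ 2 - t ^+ 2) (2 * y).
  by apply: is_derive_eq; rewrite -![_ *: _]/(_ * _) /=; ring.
have dquot := is_derive_divr (is_derive_id y 1) dden yt0.
by rewrite /phi_kernel /dphi_kernel /=; apply: is_derive_eq; field.
Qed.

Lemma is_derive_dphi_kernel (y : R) : y ^+ 2 - t ^+ 2 != 0 ->
  is_derive y 1 (dphi_kernel ^~ t) (- d2phi_kernel y t).
Proof.
move=> yt0; have yt20 : (y ^+ 2 - t ^+ 2) ^+ 2 != 0 by rewrite expf_neq0.
have dnum : is_derive y 1 (fun z : R => z ^+ 2 + t ^+ 2) (2 * y).
  by apply: is_derive_eq; rewrite -![_ *: _]/(_ * _) /=; ring.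
have dden : is_derive y 1 (fun z : R => (z ^+ 2 - t ^+ 2) ^+ 2) (4 * y * (y ^+ 2 - t ^+ 2)).
  by apply: is_derive_eq; rewrite -![_ *: _]/(_ * _) /=; ring.
have dquot := is_derive_divr dnum dden yt20.
by rewrite /dphi_kernel /d2phi_kernel /=; apply: is_derive_eq; field.
Qed.

End kernel_derivatives.

Section T2_algebra.
Context {R : realType}.
Implicit Types (A B : R -> R) (x q a b d : R).

Definition T2_of A B q y :=
  - (q * B y + (1 - q) / y ^+ 2) / ((q * A y + (1 - q) / y) * A y).

(* With [P := q a + (1-q)/x] and [N := q b + (1-q)/x^2] one has [P' = -N]
   when [a' = -b], whence this form of the quotient rule. *)
Definition dT2_of x q a b d :=
  let P := q * a + (1 - q) / x in
  let N := q * b + (1 - q) / x ^+ 2 in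
  let N' := - (q * d) - 2 * (1 - q) / x ^+ 3 in
  - (N' * P * a + N ^+ 2 * a + N * P * b) / (P ^+ 2 * a ^+ 2).

Definition dT2_Q1 x a b d := x * a * d - a * b - x * b ^+ 2.
Definition dT2_Q2 x a b d :=
  x ^+ 2 * a * d + x * a * b - 2 * x ^+ 2 * b ^+ 2 - a ^+ 2.

Lemma phi_comb_gt0 x q a : 0 < x -> 0 < a -> 0 <= q <= 1 ->
  0 < q * a * x + (1 - q).
Proof.
move=> x_gt0 a_gt0 /andP[q_ge0 q_le1].
have qax_ge0 : 0 <= q * a * x by rewrite !mulr_ge0 // ltW.
have [q_lt1|q_ge1] := ltrP q 1; first lra.
have -> : q = 1 by lra.
by rewrite mul1r subrr addr0 mulr_gt0.
Qed.

Lemma is_derive_T2_of A B x q d : 0 < x -> 0 < A x -> 0 <= q <= 1 ->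
  is_derive x 1 A (- B x) -> is_derive x 1 B (- d) ->
  is_derive x 1 (T2_of A B q) (dT2_of x q (A x) (B x) d).
Proof.
move=> x_gt0 A_gt0 q01 dA dB.
have x0 : x != 0 by rewrite gt_eqF.
have x20 : x ^+ 2 != 0 by rewrite expf_neq0.
have P0 : q * A x + (1 - q) / x != 0.
  have -> : q * A x + (1 - q) / x = (q * A x * x + (1 - q)) / x by field.
  by rewrite mulf_neq0 ?invr_eq0 // lt0r_neq0 // phi_comb_gt0.
have dsqr : is_derive x 1 (fun y : R => y ^+ 2) (2 * x).
  by apply: is_derive_eq; rewrite -![_ *: _]/(_ * _) /=; ring.
have dinv := is_derive_divr (is_derive_cst (1 - q) x 1) (is_derive_id x 1) x0.
have dinv2 := is_derive_divr (is_derive_cst (1 - q) x 1) dsqr x20.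
have dnum : is_derive x 1 (fun y => - (q * B y + (1 - q) / y ^+ 2))
    (q * d + 2 * (1 - q) / x ^+ 3).
  by apply: is_derive_eq; rewrite -![_ *: _]/(_ * _) /=; field.
have dden : is_derive x 1 (fun y => (q * A y + (1 - q) / y) * A y)
    (- (q * B x + (1 - q) / x ^+ 2) * A x - (q * A x + (1 - q) / x) * B x).
  by apply: is_derive_eq; rewrite -![_ *: _]/(_ * _) /=; field.
have := is_derive_divr dnum dden (mulf_neq0 P0 (lt0r_neq0 A_gt0)).
move=> dquot; apply: is_derive_eq; rewrite /dT2_of /=; field.
by rewrite x0 lt0r_neq0 // lt0r_neq0 // phi_comb_gt0.
Qed.

Lemma dT2_ofB x q a b d : x != 0 -> a != 0 -> q * a * x + (1 - q) != 0 ->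
  dT2_of x q a b d - dT2_of x 0 a b d =
  q * ((1 - q) * dT2_Q1 x a b d + q * a * dT2_Q2 x a b d)
    / ((q * a * x + (1 - q)) ^+ 2 * a ^+ 2).
Proof.
move=> x0 a0 P0.
by rewrite /dT2_of /dT2_Q1 /dT2_Q2 /=; field; rewrite x0 a0 P0.
Qed.

Lemma dT2_of_le x q a b d : 0 < x -> 0 < a -> 0 <= q <= 1 ->
  0 <= dT2_Q1 x a b d -> 0 <= dT2_Q2 x a b d ->
  dT2_of x 0 a b d <= dT2_of x q a b d.
Proof.
move=> x_gt0 a_gt0 q01 Q1_ge0 Q2_ge0; have P_gt0 := phi_comb_gt0 x_gt0 a_gt0 q01.
rewrite -subr_ge0 dT2_ofB ?lt0r_neq0 //.
case/andP: q01 => q_ge0 q_le1; have q'_ge0 : 0 <= 1 - q by rewrite subr_ge0.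
apply: divr_ge0; last by rewrite mulr_ge0 ?sqr_ge0.
by rewrite mulr_ge0 // addr_ge0 ?mulr_ge0 // ltW.
Qed.

End T2_algebra.

Definition moment {R : realType} (mu : {measure set R -> \bar R}) (c : R)
    (k : R -> R -> R) (y : R) : R :=
  Rintegral mu `[-c, c]%classic (k y).

Section moments.
Context {R : realType}.
Variables (mu : probability R R) (c x : R).

Local Notation K := `[-c, c]%classic.
Local Notation A := (moment mu c phi_kernel x).
Local Notation B := (moment mu c dphi_kernel x).
Local Notation D := (moment mu c d2phi_kernel x).
Local Notation G := (moment mu c cs_kernel x).

Let mK : measurable K. Proof. exact: measurable_itv. Qed.

Let itvP t : K t -> -c <= t <= c. Proof. by rewrite /= in_itv. Qed.

Let xx : x <= x <= x. Proof. by rewrite lexx. Qed.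

Lemma is_derive_moment (k dk : R -> R -> R) (u v Mk Mdk : R) :
  u < x < v -> (forall y, measurable_fun setT (k y)) ->
  (forall y t, u <= y <= v -> -c <= t <= c -> `|k y t| <= Mk) ->
  (forall y t, u <= y <= v -> -c <= t <= c -> is_derive y 1 (k ^~ t) (dk y t)) ->
  (forall y t, u <= y <= v -> -c <= t <= c -> `|dk y t| <= Mdk) ->
  is_derive x 1 (moment mu c k) (moment mu c dk x).
Proof.
move=> uxv mk k_le kdk dk_le.
have window y : u < y < v -> u <= y <= v by case/andP => uy yv; rewrite !ltW.
apply: (is_derive_Rintegral (G := cst `|Mdk|)) uxv _ _ _ _ _ => //.
- move=> y /window uyv; apply: (integrable_bounded mu mK (mk y)) => t /itvP.
  exact: k_le.
- by move=> y t /window uyv /itvP; apply: kdk.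
- exact: finite_measure_integrable_cst.
- move=> y t /window uyv /itvP /(dk_le _ _ uyv) dk_le'.
  exact: le_trans dk_le' (ler_norm _).
Qed.

Lemma integrable_kernels : 0 <= c < x ->
  [/\ mu.-integrable K (EFin \o phi_kernel x), mu.-integrable K (EFin \o dphi_kernel x),
      mu.-integrable K (EFin \o d2phi_kernel x) & mu.-integrable K (EFin \o cs_kernel x)].
Proof.
move=> /andP[c_ge0 cx].
have int (k : R -> R -> R) (M : R) : measurable_fun setT (k x) ->
    (forall t, -c <= t <= c -> `|k x t| <= M) -> mu.-integrable K (EFin \o k x).
  by move=> mk k_le; apply: (integrable_bounded mu mK mk) => t /itvP; exact: k_le.
split; apply: int.
- exact: measurable_phi_kernel.
- by move=> t; apply: phi_kernel_bound c_ge0 cx xx.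
- exact: measurable_dphi_kernel.
- by move=> t; apply: dphi_kernel_bound c_ge0 cx xx.
- exact: measurable_d2phi_kernel.
- by move=> t; apply: d2phi_kernel_bound c_ge0 cx xx.
- exact: measurable_cs_kernel.
- by move=> t; apply: cs_kernel_bound c_ge0 cx xx.
Qed.

Lemma moment_opp (k : R -> R -> R) : mu.-integrable K (EFin \o k x) ->
  moment mu c (fun y t => - k y t) x = - moment mu c k x.
Proof.
move=> intk; rewrite /moment -[RHS]mulN1r -RintegralZl //.
by apply: eq_Rintegral => t _; rewrite mulN1r.
Qed.

Lemma is_derive_phi_moment : 0 <= c < x ->
  is_derive x 1 (moment mu c phi_kernel) (- B).
Proof.
move=> cx; have [_ intB _ _] := integrable_kernels cx.
case/andP: cx => c_ge0 cx; have cu : c < (c + x) / 2 by lra.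
have uxv : (c + x) / 2 < x < x + 1 by apply/andP; split; lra.
rewrite -(moment_opp intB); apply: (is_derive_moment uxv measurable_phi_kernel).
- by move=> y t; exact: phi_kernel_bound c_ge0 cu.
- move=> y t uyv tc; apply: is_derive_phi_kernel.
  by rewrite gt_eqF // (kernel_denom_gt0 c_ge0 cu uyv tc).
- by move=> y t uyv tc; rewrite normrN; exact: dphi_kernel_bound c_ge0 cu uyv tc.
Qed.

Lemma is_derive_dphi_moment : 0 <= c < x ->
  is_derive x 1 (moment mu c dphi_kernel) (- D).
Proof.
move=> cx; have [_ _ intD _] := integrable_kernels cx.
case/andP: cx => c_ge0 cx; have cu : c < (c + x) / 2 by lra.
have uxv : (c + x) / 2 < x < x + 1 by apply/andP; split; lra.
rewrite -(moment_opp intD); apply: (is_derive_moment uxv measurable_dphi_kernel).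
- by move=> y t; exact: dphi_kernel_bound c_ge0 cu.
- move=> y t uyv tc; apply: is_derive_dphi_kernel.
  by rewrite gt_eqF // (kernel_denom_gt0 c_ge0 cu uyv tc).
- by move=> y t uyv tc; rewrite normrN; exact: d2phi_kernel_bound c_ge0 cu uyv tc.
Qed.

Lemma phi_moment_gt0 : 0 <= c < x -> mu K = 1%E -> 0 < A.
Proof.
move=> cx muK; have [intA _ _ _] := integrable_kernels cx.
case/andP: cx => c_ge0 cx; have x_gt0 : 0 < x by lra.
apply: lt_le_trans (_ : 0 < 1 / x) _; first by rewrite divr_gt0.
have <- : Rintegral mu K (fun=> 1 / x) = 1 / x.
  by rewrite Rintegral_cst // (congr1 fine muK) mulr1.
apply: le_Rintegral => //; first exact: finite_measure_integrable_cst.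
move=> t /itvP tc; have xt_gt0 := kernel_denom_gt0 c_ge0 cx xx tc.
rewrite /phi_kernel -subr_ge0.
have -> : x / (x ^+ 2 - t ^+ 2) - 1 / x = t ^+ 2 / (x * (x ^+ 2 - t ^+ 2)).
  by field; rewrite !lt0r_neq0.
by rewrite divr_ge0 ?sqr_ge0 // mulr_ge0 // ltW.
Qed.

Lemma moment_comb_ge0 (k0 k1 k2 k3 : R) : 0 <= c < x ->
  (forall t, -c <= t <= c -> 0 <= k0 * phi_kernel x t + k1 * dphi_kernel x t
                                  + k2 * d2phi_kernel x t + k3 * cs_kernel x t) ->
  0 <= k0 * A + k1 * B + k2 * D + k3 * G.
Proof.
move=> cx comb_ge0; have [i0 i1 i2 i3] := integrable_kernels cx.
have intZ (k : R) (f : R -> R) : mu.-integrable K (EFin \o f) ->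
    mu.-integrable K (EFin \o (fun t => k * f t)).
  move=> intf; apply: (eq_integrable mK _ _ _ (integrableZl mK k intf)).
  by move=> t _ /=; rewrite EFinM.
have intD (f g : R -> R) : mu.-integrable K (EFin \o f) -> mu.-integrable K (EFin \o g) ->
    mu.-integrable K (EFin \o (fun t => f t + g t)).
  move=> intf intg; apply: (eq_integrable mK _ _ _ (integrableD mK intf intg)).
  by move=> t _ /=; rewrite EFinD.
have j0 := intZ k0 _ i0; have j1 := intZ k1 _ i1.
have j2 := intZ k2 _ i2; have j3 := intZ k3 _ i3.
have j01 := intD _ _ j0 j1; have j012 := intD _ _ j01 j2.
rewrite /moment -(RintegralZl _ mK i0) -(RintegralZl _ mK i1) -(RintegralZl _ mK i2).
rewrite -(RintegralZl _ mK i3) -(RintegralD mK j0 j1) -(RintegralD mK j01 j2).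
rewrite -(RintegralD mK j012 j3).
by apply: Rintegral_ge0 => t /itvP; exact: comb_ge0.
Qed.

Lemma dphi_moment_sqr_le : 0 <= c < x -> mu K = 1%E -> B ^+ 2 <= A * G.
Proof.
move=> cx muK; have A_gt0 := phi_moment_gt0 cx muK.
have /andP[c_ge0 cx'] := cx; have x_gt0 : 0 < x by lra.
pose l := B / A.
have : 0 <= l ^+ 2 * A + - (2 * l) * B + 0 * D + 1 * G.
  apply: moment_comb_ge0 => // t tc; have xt_gt0 := kernel_denom_gt0 c_ge0 cx' xx tc.
  have -> : l ^+ 2 * phi_kernel x t + - (2 * l) * dphi_kernel x t + 0 * d2phi_kernel x t
      + 1 * cs_kernel x t = phi_kernel x t * (l - dphi_kernel x t / phi_kernel x t) ^+ 2.
    by rewrite /phi_kernel /dphi_kernel /cs_kernel; field; rewrite !lt0r_neq0.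
  by rewrite mulr_ge0 ?sqr_ge0 // divr_ge0 // ltW.
move=> comb_ge0; rewrite -subr_ge0; have -> : A * G - B ^+ 2 =
    A * (l ^+ 2 * A + - (2 * l) * B + 0 * D + 1 * G).
  by rewrite /l; field; rewrite lt0r_neq0.
by rewrite mulr_ge0 // ltW.
Qed.

Lemma dT2_Q1_moment_ge0 : 0 <= c < x -> mu K = 1%E -> 0 <= dT2_Q1 x A B D.
Proof.
move=> cx muK; have A_gt0 := phi_moment_gt0 cx muK.
have /andP[c_ge0 cx'] := cx; have x_gt0 : 0 < x by lra.
have : 0 <= 0 * A + -1 * B + x * D + - x * G.
  apply: moment_comb_ge0 => // t tc; have xt_gt0 := kernel_denom_gt0 c_ge0 cx' xx tc.
  have -> : 0 * phi_kernel x t + -1 * dphi_kernel x t + x * d2phi_kernel x t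
      + - x * cs_kernel x t = 4 * x ^+ 2 * t ^+ 2 / (x ^+ 2 - t ^+ 2) ^+ 3.
    by rewrite /phi_kernel /dphi_kernel /d2phi_kernel /cs_kernel; field; rewrite !lt0r_neq0.
  apply: divr_ge0; last by rewrite exprn_ge0 // ltW.
  by rewrite mulr_ge0 ?sqr_ge0 // mulr_ge0 ?sqr_ge0.
have := dphi_moment_sqr_le cx muK; rewrite -subr_ge0 => cs_ge0 comb_ge0.
have -> : dT2_Q1 x A B D = A * (0 * A + -1 * B + x * D + - x * G) + x * (A * G - B ^+ 2).
  by rewrite /dT2_Q1; ring.
by rewrite addr_ge0 ?mulr_ge0 // ltW.
Qed.

Lemma dT2_Q2_moment_ge0 : 0 <= c < x -> mu K = 1%E -> 0 <= dT2_Q2 x A B D.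
Proof.
move=> cx muK; have A_gt0 := phi_moment_gt0 cx muK.
have /andP[c_ge0 cx'] := cx; have x_gt0 : 0 < x by lra.
have : 0 <= -1 * A + x * B + x ^+ 2 * D + - (2 * x ^+ 2) * G.
  apply: moment_comb_ge0 => // t tc; have xt_gt0 := kernel_denom_gt0 c_ge0 cx' xx tc.
  have -> : -1 * phi_kernel x t + x * dphi_kernel x t + x ^+ 2 * d2phi_kernel x t
      + - (2 * x ^+ 2) * cs_kernel x t = 4 * x * t ^+ 2 / (x ^+ 2 - t ^+ 2) ^+ 2.
    by rewrite /phi_kernel /dphi_kernel /d2phi_kernel /cs_kernel; field; rewrite !lt0r_neq0.
  apply: divr_ge0; last by rewrite exprn_ge0 // ltW.
  by rewrite mulr_ge0 ?sqr_ge0 // mulr_ge0 // ltW.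
have := dphi_moment_sqr_le cx muK; rewrite -subr_ge0 => cs_ge0 comb_ge0.
have -> : dT2_Q2 x A B D = A * (-1 * A + x * B + x ^+ 2 * D + - (2 * x ^+ 2) * G)
    + 2 * x ^+ 2 * (A * G - B ^+ 2).
  by rewrite /dT2_Q2; ring.
by rewrite addr_ge0 ?mulr_ge0 ?sqr_ge0 // ltW.
Qed.

End moments.

Theorem mainTheorem13 (R : realType) (mu : probability R R) :
  (exists M : R, msupport mu `<=` [set t | 0 <= t <= M]) ->
  forall x q : R,
    sup (msupport mu) < x -> 0 <= q <= 1 ->
    derivable (fun y => T2 mu y q) x 1 /\
    derivable (fun y => T2 mu y 0) x 1 /\
    derive1 (fun y => T2 mu y 0) x <= derive1 (fun y => T2 mu y q) x.
Proof.
move=> [M suppM] x q bx q01; set b := sup (msupport mu) in bx.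
have supp_le t : msupport mu t -> 0 <= t <= b.
  move=> st; have /andP[-> _] := suppM t st; apply: sup_upper_bound => //.
  by split; [exists t | exists M => s /suppM /andP[]].
have b_ge0 : 0 <= b.
  rewrite /b; have [->|/set0P[t /supp_le /andP[t_ge0 tb]]] := eqVneq (msupport mu) set0.
    by rewrite sup0.
  exact: le_trans tb.
pose c := (b + x) / 2; have cx : 0 <= c < x by apply/andP; split; rewrite /c; lra.
have itvC_null : mu.-negligible (~` `[-c, c]%classic).
  apply: negligibleS (msupportC_negligible mu) => t; apply: contra_not.
  by move=> /supp_le /andP[t_ge0 tb]; rewrite /= in_itv /= /c; apply/andP; split; lra.
have muK := negligibleC_probability1 (measurable_itv _) itvC_null.
have T2E q' : (fun y => T2 mu y q') =
    T2_of (moment mu c phi_kernel) (moment mu c dphi_kernel) q'.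
  apply/funext => y; rewrite /T2 /phi /dphi /T2_of /moment.
  rewrite !(RintegralT_negligibleC (measurable_itv _) _ itvC_null) //.
  - by rewrite subrr mul0r addr0 mul1r.
  - exact: measurable_phi_kernel.
  - exact: measurable_dphi_kernel.
have A_gt0 := phi_moment_gt0 cx muK.
have x_gt0 : 0 < x by case/andP: cx => ? ?; lra.
have dT2 q' : 0 <= q' <= 1 -> is_derive x 1 (fun y => T2 mu y q')
    (dT2_of x q' (moment mu c phi_kernel x) (moment mu c dphi_kernel x)
       (moment mu c d2phi_kernel x)).
  move=> q'01; rewrite T2E.
  exact: is_derive_T2_of x_gt0 A_gt0 q'01 (is_derive_phi_moment mu cx)
    (is_derive_dphi_moment mu cx).
have q0_01 : (0 : R) <= 0 <= (1 : R) by rewrite lexx ler01.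
have [dTq dT0] := (dT2 q q01, dT2 0 q0_01).
split; [by case: dTq | split; first by case: dT0].
rewrite !derive1E !derive_val.
apply: dT2_of_le => //; [exact: dT2_Q1_moment_ge0 | exact: dT2_Q2_moment_ge0].
Qed.
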